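(* Let $k\geq 1$ and $n\geq k+2$ be integers. Then the $k$-distance matrices of all $k$-trees with $n$ vertices are equivalent to one another: for any two $k$-trees $T,T'$ with $n$ vertices there exist square integer matrices ${\sf P},{\sf Q}$ with $\det {\sf P},\det{\sf Q}\in\{\pm1\}$ such that ${\sf D}^k(T)={\sf P}\,{\sf D}^k(T')\,{\sf Q}$.
   Context: A $k$-tree is either the complete graph on $k$ vertices, or a graph obtained from a smaller $k$-tree by adding a new vertex joined by $k$ edges to all vertices of a $k$-clique (complete subgraph on $k$ vertices). In a $k$-tree $T$, for $k$-cliques $\tau,\tau'$, a $k$-walk from $\tau$ to $\tau'$ is a sequence $\tau_1\sigma_1\tau_2\sigma_2\cdots\tau_l$ with $\tau_1=\tau$, $\tau_l=\tau'$, the $\tau_i$ being $k$-cliques and $\sigma_i$ a $(k+1)$-clique containing both $\tau_i$ and $\tau_{i+1}$; the $k$-distance $\operatorname{dist}^k(\tau,\tau')$ is the number of $(k+1)$-cliques in a shortest such walk. If $T$ has $c$ $k$-cliques $\tau_1,\dots,\tau_c$ (in any fixed order), the $k$-distance matrix ${\sf D}^k(T)$ is the $c\times c$ integer matrix with $(i,j)$-entry $0$ if $i=j$ and $\operatorname{dist}^k(\tau_i,\tau_j)$ otherwise. (All $k$-trees with $n$ vertices have the same number $k(n-k)+1$ of $k$-cliques.) *)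

From mathcomp Require Import all_boot all_order all_algebra.
Set Implicit Arguments. Unset Strict Implicit. Unset Printing Implicit Defensive.
Import GRing.Theory.

Section KTrees.
Variables (T : finType) (e : rel T).

Definition clique (A : {set T}) : bool :=
  [forall x in A, forall y in A, (x != y) ==> e x y].

Definition kclique (k : nat) (A : {set T}) : bool := (#|A| == k) && clique A.

Definition kstep (k : nat) (A B : {set T}) : bool :=
  [exists S : {set T}, [&& kclique k.+1 S, A \subset S & B \subset S]].

(* There is a k-walk  A = tau_1 sigma_1 ... tau_{m+1} = B  using exactly m
   (k+1)-cliques (all tau_i being k-cliques). *)
Definition kwalk (k : nat) (A B : {set T}) (m : nat) : bool :=
  [exists s : m.-tuple {set T},
     [&& kclique k A, all (kclique k) s, path (kstep k) A s & last A s == B]].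

(* k-distance: least m such that a k-walk with m (k+1)-cliques exists.
   (A shortest walk never repeats a k-clique, so m < #|{set T}|; the
   default value for unreachable pairs is irrelevant in k-trees.) *)
Definition kdist (k : nat) (A B : {set T}) : nat :=
  find (kwalk k A B) (iota 0 #|{set T}|).

(* k-trees, as induced subgraphs on a vertex set V: either V is a k-clique
   (complete graph on k vertices), or V = v |: W where W induces a k-tree
   and the neighbours of v in W form exactly a k-clique C. *)
Inductive ktree_on (k : nat) : {set T} -> Prop :=
| ktree_base V : kclique k V -> ktree_on k V
| ktree_add W v : ktree_on k W -> v \notin W ->
    (exists2 C : {set T}, kclique k C && (C \subset W) &
       forall u, u \in W -> e v u = (u \in C)) ->
    ktree_on k (v |: W).

Definition is_ktree (k : nat) : Prop := ktree_on k [set: T].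

Definition kclique_enum (k c : nat) (tau : 'I_c -> {set T}) : Prop :=
  injective tau /\ (forall A : {set T}, kclique k A = (A \in codom tau)).

Definition kdistmx (k c : nat) (tau : 'I_c -> {set T}) : 'M[int]_c :=
  \matrix_(i, j) (if i == j then 0%R else Posz (kdist k (tau i) (tau j))).

End KTrees.

From mathcomp Require Import all_boot all_order all_algebra.
From mathcomp Require Import zify perm.
Import GRing.Theory.
Set Implicit Arguments. Unset Strict Implicit. Unset Printing Implicit Defensive.

(* A k-tree grows from a k-clique by adding vertices v joined to a k-clique C.  Such a
   step creates exactly the k new k-cliques v |: C :\ u (u in C).  Sending every k-clique
   through v to C retracts walks of the new k-tree to walks of the old one that are no
   longer, so old distances are unchanged, a new clique is at distance d(C, A) + 1 from an
   old clique A, and two new cliques are at distance 1.  Subtracting the row and column of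
   C from the k new ones thus leaves the old matrix bordered by all-ones blocks, with
   -(I + J) in the new corner.  Keeping the unimodular transformations normalised so that
   they send the all-ones vector to e_0, the border becomes canonical as well, and by
   induction the k-distance matrix of every k-tree on t + k vertices is unimodularly
   equivalent to one matrix depending only on k and t. *)

Lemma find_iota (P : pred nat) N d :
  P d -> (forall m, m < d -> ~~ P m) -> d < N -> find P (iota 0 N) = d.
Proof.
move=> Pd ltP ltdN; rewrite -(subnKC (ltnW ltdN)) iotaD find_cat size_iota add0n.
have -> : has P (iota 0 d) = false.
  by apply/hasPn => m; rewrite mem_iota => /andP[_]; apply: ltP.
by move: ltdN; rewrite -subn_gt0; case: (N - d) => //= r _; rewrite Pd addn0.
Qed.

Lemma exists_perm_reindex (U : eqType) c (tau sigma : 'I_c -> U) :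
  injective sigma -> (forall i, sigma i \in codom tau) ->
  exists s : 'S_c, forall i, tau (s i) = sigma i.
Proof.
move=> sigma_inj sigma_tau; pose f i := iinv (sigma_tau i).
have tau_f i : tau (f i) = sigma i by apply: f_iinv.
have f_inj : injective f by move=> i j fij; apply: sigma_inj; rewrite -!tau_f fij.
by exists (perm f_inj) => i; rewrite permE.
Qed.

Lemma enum_set_ord (T : finType) (A : {set T}) n : #|A| = n ->
  exists x : 'I_n -> T, injective x /\ forall i, x i \in A.
Proof.
move=> cardA; exists (fun i => enum_val (cast_ord (esym cardA) i)); split.
  by move=> i j /enum_val_inj/cast_ord_inj.
by move=> i; apply: enum_valP.
Qed.

Lemma subsetU1_notin (T : finType) (x : T) (A B : {set T}) :
  A \subset x |: B -> x \notin A -> A \subset B.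
Proof.
move=> sAxB xNA; apply/subsetP => y yA; move: (subsetP sAxB y yA).
by rewrite in_setU1; case: eqP => // yx; rewrite -yx yA in xNA.
Qed.

Section KWalksIn.
Variables (T : finType) (e : rel T) (k : nat).
Implicit Types (W A B S Y Z : {set T}) (m n d : nat).

Lemma subset_clique A B : A \subset B -> clique e B -> clique e A.
Proof.
move=> sAB /forallP cB; apply/forallP => x; apply/implyP => xA.
apply/forallP => y; apply/implyP => yA.
by move/implyP/(_ (subsetP sAB x xA))/forallP/(_ y)/implyP/(_ (subsetP sAB y yA)): (cB x).
Qed.

Definition kclique_in W A := kclique e k A && (A \subset W).

Definition kcliques_in W := [set A | kclique_in W A].

Definition kstep_in W A B :=
  [exists S, [&& kclique e k.+1 S, S \subset W, A \subset S & B \subset S]].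

Fixpoint kwalk_in W m A B : bool :=
  if m is m'.+1 then kclique_in W A && [exists Y, kstep_in W A Y && kwalk_in W m' Y B]
  else kclique_in W A && (A == B).

Definition is_kdist_in W A B d :=
  kwalk_in W d A B /\ forall m, kwalk_in W m A B -> d <= m.

Definition kdist_in W A B := find (fun m => kwalk_in W m A B) (iota 0 #|{set T}|).

Lemma kstep_in_sym W A B : kstep_in W A B = kstep_in W B A.
Proof.
by apply/existsP/existsP => -[S /and4P[kS sSW sAS sBS]]; exists S; rewrite kS sSW sAS sBS.
Qed.

Lemma kwalk_in_kclique W m A B : kwalk_in W m A B -> kclique_in W A && kclique_in W B.
Proof.
elim: m A => [|m IHm] A /=; first by case/andP=> kA /eqP <-; rewrite kA.
by case/andP=> -> /existsP[Y /andP[_ /IHm /andP[_ ->]]].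
Qed.

Lemma kwalk_in1 W A B :
  kwalk_in W 1 A B = [&& kclique_in W A, kstep_in W A B & kclique_in W B].
Proof.
rewrite /=; congr (_ && _); apply/existsP/idP => [[Y /and3P[sAY kY /eqP <-]] | /andP[sAB kB]].
  by rewrite sAY.
by exists B; rewrite sAB kB eqxx.
Qed.

Lemma kwalk_in_cat W m n A B Z :
  kwalk_in W m A B -> kwalk_in W n B Z -> kwalk_in W (m + n) A Z.
Proof.
elim: m A => [|m IHm] A /=; first by case/andP=> _ /eqP ->.
case/andP=> kA /existsP[Y /andP[sAY wYB]] wBZ.
by rewrite kA; apply/existsP; exists Y; rewrite sAY (IHm _ wYB).
Qed.

Lemma kwalk_in_sym W m A B : kwalk_in W m A B -> kwalk_in W m B A.
Proof.
elim: m A => [|m IHm] A; first by case/andP=> kA /eqP <-; rewrite /= kA eqxx.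
case/andP=> kA /existsP[Y /andP[sAY wYB]]; rewrite -addn1.
apply: kwalk_in_cat (IHm _ wYB) _.
by have /andP[kY _] := kwalk_in_kclique wYB; rewrite kwalk_in1 kY kA kstep_in_sym sAY.
Qed.

Lemma is_kdist_in_sym W A B d : is_kdist_in W A B d -> is_kdist_in W B A d.
Proof.
case=> wAB min_d; split; first exact: kwalk_in_sym.
by move=> m /kwalk_in_sym; apply: min_d.
Qed.

Lemma kdist_in_sym W A B : kdist_in W A B = kdist_in W B A.
Proof. by apply: eq_find => m; apply/idP/idP; apply: kwalk_in_sym. Qed.

Lemma is_kdist_in0 W A : kclique_in W A -> is_kdist_in W A A 0.
Proof. by move=> kA; split=> //=; rewrite kA eqxx. Qed.

Lemma kwalk_in_subset W W' m A B :
  W \subset W' -> kwalk_in W m A B -> kwalk_in W' m A B.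
Proof.
move=> sWW'; have kW' C : kclique_in W C -> kclique_in W' C.
  by case/andP=> kC sCW; rewrite /kclique_in kC (subset_trans sCW).
elim: m A => [|m IHm] A /=; case/andP=> /kW'-> //= /existsP[Y /andP[sAY wYB]].
apply/existsP; exists Y; rewrite IHm // andbT.
case/existsP: sAY => S /and4P[kS sSW sAS sYS]; apply/existsP; exists S.
by rewrite kS sAS sYS (subset_trans sSW).
Qed.

Lemma card_lt_card_set : #|T| < #|{set T}|.
Proof. by rewrite -[#|{set T}|]cardsT -powersetT card_powerset cardsT ltn_expl. Qed.

Lemma kdist_in_eq W A B d : is_kdist_in W A B d -> d <= #|T| -> kdist_in W A B = d.
Proof.
case=> wAB min_d le_dT; apply: find_iota => //; last exact: leq_ltn_trans card_lt_card_set.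
by move=> m lt_md; apply/negP => /min_d; rewrite leqNgt lt_md.
Qed.

Definition kclique_enum_in W c (tau : 'I_c -> {set T}) :=
  injective tau /\ forall A, kclique_in W A = (A \in codom tau).

Definition kdistmx_in W c (tau : 'I_c -> {set T}) : 'M[int]_c :=
  \matrix_(i, j) Posz (kdist_in W (tau i) (tau j)).

Lemma card_kclique_enum_in W c (tau : 'I_c -> {set T}) :
  kclique_enum_in W tau -> c = #|kcliques_in W|.
Proof.
case=> tau_inj tauP; rewrite -[c]card_ord -(card_codom tau_inj).
by apply: eq_card => A; rewrite inE tauP.
Qed.

Lemma enum_val_kclique_enum_in W :
  kclique_enum_in W (fun i : 'I_#|kcliques_in W| => enum_val i).
Proof.
split=> [|A]; first exact: enum_val_inj.
apply/idP/codomP => [kA | [i ->]]; last by have := enum_valP i; rewrite inE.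
have kA' : A \in kcliques_in W by rewrite inE.
by exists (enum_rank_in kA' A); rewrite enum_rankK_in.
Qed.

Lemma kclique_inT A : kclique_in [set: T] A = kclique e k A.
Proof. by rewrite /kclique_in subsetT andbT. Qed.

Lemma kstep_kstep_in A B : kstep e k A B = kstep_in [set: T] A B.
Proof. by apply: eq_existsb => S; rewrite subsetT. Qed.

Lemma kwalk_kwalk_in m A B : kwalk e k A B m = kwalk_in [set: T] m A B.
Proof.
elim: m A => [|m IHm] A; rewrite [RHS]/= kclique_inT.
  apply/existsP/andP => [[[[|//] sz]] /and4P[kA _ _ AB] | [kA AB]]; first by [].
  by exists [tuple]; rewrite /= kA AB.
apply/existsP/andP => [[[[|Y s] //= size_s]] | [kA /existsP[Y /andP[sAY]]]].
  case/and4P=> kA /andP[kY ks] /andP[sAY ps] lastB; split=> //.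
  apply/existsP; exists Y; rewrite -kstep_kstep_in sAY -IHm.
  by apply/existsP; exists (Tuple size_s); rewrite /= kY ks ps lastB.
rewrite -IHm => /existsP[s /and4P[kY ks ps lastB]].
by exists (cons_tuple Y s); rewrite /= kA kY ks kstep_kstep_in sAY ps lastB.
Qed.

Lemma kclique_enum_inT c (tau : 'I_c -> {set T}) :
  kclique_enum e k tau -> kclique_enum_in [set: T] tau.
Proof. by case=> tau_inj tauP; split=> // A; rewrite kclique_inT. Qed.

Lemma kdistmx_kdistmx_in c (tau : 'I_c -> {set T}) :
  kclique_enum_in [set: T] tau -> kdistmx e k tau = kdistmx_in [set: T] tau.
Proof.
case=> _ tauP; apply/matrixP => i j; rewrite !mxE.
have -> : kdist e k (tau i) (tau j) = kdist_in [set: T] (tau i) (tau j).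
  by apply: eq_find => m; rewrite kwalk_kwalk_in.
case: eqP => [-> | //]; rewrite (@kdist_in_eq _ _ _ 0) //.
by apply: is_kdist_in0; rewrite tauP codom_f.
Qed.

End KWalksIn.

Section CanonicalForm.
Variable k : nat.
Local Open Scope ring_scope.

(* [canon_kdistmx (1 + t * k) t] is [[0, 1^T], [1, diag(-(I + J), ..., -(I + J))]]
   with t diagonal blocks of size k. *)
Fixpoint canon_kdist t : nat -> nat -> int :=
  if t is t'.+1 then fun i j =>
    let c := (1 + t' * k)%N in
    if (i < c)%N then (if (j < c)%N then canon_kdist t' i j else (i == 0%N)%:R)
    else if (j < c)%N then (j == 0%N)%:R else (if i == j then -2 else -1)
  else fun _ _ => 0.

Definition canon_kdistmx c t : 'M[int]_c := \matrix_(i, j) canon_kdist t i j.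

Definition e0 c : 'cV[int]_c := \col_i (i == 0%N :> nat)%:R.

(* The normalisation on the all-ones vector makes the border of the next step canonical. *)
Definition reduces_to_canon c (M : 'M[int]_c) t := exists P Q : 'M[int]_c,
  [/\ P \in unitmx, Q \in unitmx, P *m const_mx 1 = e0 c, Q^T *m const_mx 1 = e0 c
    & P *m M *m Q = canon_kdistmx c t].

Lemma reduces_to_canon_perm c (s : 'S_c) (M : 'M[int]_c) t :
  reduces_to_canon (\matrix_(i, j) M (s i) (s j)) t -> reduces_to_canon M t.
Proof.
case=> P [Q [uP uQ P1 Q1 PMQ]].
have perm1 : perm_mx s *m const_mx 1 = const_mx 1 :> 'cV[int]_c.
  by rewrite -row_permE row_perm_const.
exists (P *m perm_mx s), (perm_mx s^-1 *m Q); split.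
- by rewrite unitmx_mul uP unitmx_perm.
- by rewrite unitmx_mul uQ unitmx_perm.
- by rewrite -mulmxA perm1.
- by rewrite trmx_mul tr_perm_mx invgK -mulmxA perm1.
rewrite -PMQ; have -> : \matrix_(i, j) M (s i) (s j) = perm_mx s *m M *m perm_mx s^-1.
  by rewrite -row_permE -col_permE; apply/matrixP => i j; rewrite !mxE.
by rewrite !mulmxA.
Qed.

Section Border.
Variables (c0 : nat) (D0 : 'M[int]_c0) (iC : 'I_c0).

Definition kdist_border : 'M[int]_(c0 + k) :=
  block_mx D0 (\matrix_(i, j) (D0 i iC + 1)) (\matrix_(i, j) (D0 iC j + 1))
           (\matrix_(i, j) (i != j)%:R).

Definition border_elim : 'M[int]_(c0 + k) :=
  block_mx 1%:M 0 (\matrix_(i, j) - (j == iC)%:R) 1%:M.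

Lemma border_elim_unit : border_elim \in unitmx.
Proof. by rewrite unitmxE det_lblock !det1 mulr1 unitr1. Qed.

Lemma mul_border_elim n (M : 'M[int]_(c0, n)) :
  \matrix_(i < k, j < c0) - (j == iC)%:R *m M = \matrix_(i, j) - M iC j.
Proof.
apply/matrixP => i j; rewrite !mxE (bigD1 iC) //= big1 => [|l /negPf jl].
  by rewrite !mxE eqxx mulN1r addr0.
by rewrite !mxE jl oppr0 mul0r.
Qed.

Lemma mul_tr_border_elim m (M : 'M[int]_(m, c0)) :
  M *m (\matrix_(i < k, j < c0) - (j == iC)%:R)^T = \matrix_(i, j) - M i iC.
Proof. by rewrite -[M]trmxK -trmx_mul mul_border_elim; apply/matrixP => i j; rewrite !mxE. Qed.

Lemma border_elim_kdist_border : D0 iC iC = 0 ->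
  border_elim *m kdist_border *m border_elim^T =
  block_mx D0 (const_mx 1) (const_mx 1) (\matrix_(i, j) if i == j then -2 else -1).
Proof.
move=> D0CC; rewrite tr_block_mx !trmx1 !trmx0 !mulmx_block !mul1mx !mul0mx !mulmx1 !mulmx0.
rewrite ?addr0 ?add0r !mul_border_elim !mul_tr_border_elim.
congr block_mx; apply/matrixP => i j; rewrite !mxE ?addKr //.
by rewrite D0CC; case: (i == j) => /=; lia.
Qed.

End Border.

Lemma canon_kdistmxS t c0 : c0 = (1 + t * k)%N ->
  canon_kdistmx (c0 + k) t.+1 =
  block_mx (canon_kdistmx c0 t) (\matrix_(i, j) (i == 0%N :> nat)%:R)
           (\matrix_(i, j) (j == 0%N :> nat)%:R) (\matrix_(i, j) if i == j then -2 else -1).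
Proof.
move=> c0E; apply/matrixP => i j; rewrite -(splitK i) -(splitK j).
case: (split i) => a; case: (split j) => b;
  rewrite ?block_mxEul ?block_mxEur ?block_mxEdl ?block_mxEdr !mxE /= -c0E
          ?ltn_ord ?(ltnNge _ c0) ?leq_addr //=.
by rewrite eqn_add2l.
Qed.

Lemma mulmx_const1_e0 m n (P : 'M[int]_m) : P *m const_mx 1 = e0 m ->
  P *m const_mx 1 = \matrix_(i < m, j < n) (i == 0%N :> nat)%:R.
Proof.
move=> P1; apply/matrixP => i j.
have := congr1 (fun v : 'cV[int]_m => v i 0) P1; rewrite !mxE => <-.
by apply: eq_bigr => l _; rewrite !mxE.
Qed.

Lemma border_elim_const1 c0 (iC : 'I_c0) (R : 'M[int]_c0) :
  (0 < c0)%N -> R *m const_mx 1 = e0 c0 ->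
  block_mx R 0 0 1%:M *m border_elim iC *m const_mx 1 = e0 (c0 + k).
Proof.
move=> c0_gt0 R1; rewrite -col_mx_const -mulmxA !mul_block_col !mul1mx !mul0mx !addr0.
rewrite mul_border_elim R1 add0r; apply/matrixP => i j; rewrite -(splitK i).
by case: (split i) => a; rewrite ?col_mxEu ?col_mxEd !mxE ?addNr //= addn_eq0 eqn0Ngt c0_gt0.
Qed.

Lemma reduces_to_canon_border t c0 (D0 : 'M[int]_c0) iC :
  c0 = (1 + t * k)%N -> D0 iC iC = 0 ->
  reduces_to_canon D0 t -> reduces_to_canon (kdist_border D0 iC) t.+1.
Proof.
move=> c0E D0CC [P [Q [uP uQ P1 Q1 PDQ]]].
have c0_gt0 : (0 < c0)%N by rewrite c0E.
have udiag (R : 'M[int]_c0) : R \in unitmx -> block_mx R 0 0 (1%:M : 'M_k) \in unitmx.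
  by rewrite !unitmxE det_ublock det1 mulr1.
pose E := border_elim iC.
exists (block_mx P 0 0 1%:M *m E), (E^T *m block_mx Q 0 0 1%:M); split.
- by rewrite unitmx_mul udiag ?border_elim_unit.
- by rewrite unitmx_mul unitmx_tr udiag ?border_elim_unit.
- exact: border_elim_const1.
- by rewrite trmx_mul trmxK tr_block_mx !trmx0 trmx1 border_elim_const1.
rewrite mulmxA -[_ *m E *m _ *m E^T]mulmxA -[_ *m E *m _]mulmxA [E *m _]mulmxA.
rewrite border_elim_kdist_border //.
rewrite !mulmx_block !mul0mx !mulmx0 !mul1mx !mulmx1 ?addr0 ?add0r PDQ (canon_kdistmxS c0E).
rewrite (mulmx_const1_e0 _ P1); congr block_mx; apply/trmx_inj.
by rewrite trmx_mul trmx_const (mulmx_const1_e0 _ Q1); apply/matrixP => i j; rewrite !mxE.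
Qed.

Lemma reduces_to_canon_equiv c (M M' : 'M[int]_c) t :
  reduces_to_canon M t -> reduces_to_canon M' t ->
  exists P Q : 'M[int]_c, [/\ P \in unitmx, Q \in unitmx & M = P *m M' *m Q].
Proof.
move=> [P [Q [uP uQ _ _ PMQ]]] [P' [Q' [uP' uQ' _ _ PMQ']]].
exists (invmx P *m P'), (Q' *m invmx Q); split.
- by rewrite unitmx_mul unitmx_inv uP uP'.
- by rewrite unitmx_mul unitmx_inv uQ uQ'.
have -> : M = invmx P *m (P *m M *m Q) *m invmx Q by rewrite -mulmxA mulmxK // mulKmx.
by rewrite PMQ -PMQ' !mulmxA.
Qed.

End CanonicalForm.

Section KTreeInvariant.
Variables (T : finType) (e : rel T) (k : nat).

(* The diameter bound keeps distances inside the search range of [kdist_in]. *)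
Definition ktree_inv (W : {set T}) t := [/\ #|W| = t + k,
  #|kcliques_in e k W| = (1 + t * k)%N,
  forall A B, kclique_in e k W A -> kclique_in e k W B ->
    exists2 d, is_kdist_in e k W A B d & d <= t
  & forall c (tau : 'I_c -> {set T}), kclique_enum_in e k W tau ->
      reduces_to_canon k (kdistmx_in e k W tau) t].

Lemma ktree_inv_kclique V : kclique e k V -> ktree_inv V 0.
Proof.
move=> kV; have kclique_inV A : kclique_in e k V A = (A == V).
  apply/idP/eqP => [/andP[/andP[/eqP cardA _] sAV] | ->]; last by rewrite /kclique_in kV subxx.
  by apply/eqP; rewrite eqEcard sAV cardA; case/andP: kV => /eqP ->; rewrite leqnn.
have kcliquesV : kcliques_in e k V = [set V] by apply/setP => A; rewrite !inE kclique_inV.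
split=> [||A B|c tau tauP].
- by case/andP: kV => /eqP.
- by rewrite kcliquesV cards1 mul0n.
- rewrite !kclique_inV => /eqP-> /eqP->.
  by exists 0 => //; apply: is_kdist_in0; rewrite kclique_inV.
have c1 : c = 1 by rewrite (card_kclique_enum_in tauP) kcliquesV cards1.
subst c; exists 1%:M%R, 1%:M%R.
split; rewrite ?unitmx1 ?trmx1 ?mul1mx ?mulmx1 //; apply/matrixP => i j; rewrite !mxE !ord1 //.
rewrite (@kdist_in_eq _ _ _ _ _ _ 0) //.
by apply: is_kdist_in0; rewrite (proj2 tauP) codom_f.
Qed.

End KTreeInvariant.

Section KTreeExtension.
Variables (T : finType) (e : rel T) (k : nat) (W C : {set T}) (v : T).
Hypotheses (esym : symmetric e) (k_gt0 : 0 < k) (vNW : v \notin W) (kC : kclique e k C)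
  (sCW : C \subset W) (adj_v : forall u, u \in W -> e v u = (u \in C)).
Implicit Types (A B S : {set T}) (u w : T).

Local Notation W' := (v |: W).
Local Notation kclique_in := (kclique_in e k).
Local Notation kstep_in := (kstep_in e k).
Local Notation kwalk_in := (kwalk_in e k).
Local Notation is_kdist_in := (is_kdist_in e k).

Definition facet u := v |: (C :\ u).

Definition retract A := if v \in A then C else A.

Lemma v_notin_C : v \notin C.
Proof. by apply: contra vNW => /(subsetP sCW). Qed.

Lemma card_C : #|C| = k.
Proof. by case/andP: kC => /eqP. Qed.

Lemma kclique_vC : kclique e k.+1 (v |: C).
Proof.
have e_vC u : u \in C -> e v u by move=> uC; rewrite adj_v ?(subsetP sCW).
case/andP: kC => _ /forallP cC; rewrite /kclique cardsU1 v_notin_C card_C eqxx /=.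
apply/forallP => x; apply/implyP; rewrite in_setU1 => xvC.
apply/forallP => y; apply/implyP; rewrite in_setU1 => yvC; apply/implyP => xy.
case/predU1P: xvC xy => [-> | xC]; case/predU1P: yvC => [-> | yC].
- by rewrite eqxx.
- by move=> _; apply: e_vC.
- by move=> _; rewrite esym e_vC.
by move/implyP: (cC x) => /(_ xC)/forallP/(_ y)/implyP/(_ yC)/implyP.
Qed.

Lemma kclique_in_C : kclique_in W C.
Proof. by rewrite /kclique_in kC sCW. Qed.

Lemma v_in_facet u : v \in facet u.
Proof. exact: setU11. Qed.

Lemma facet_sub u : facet u \subset v |: C.
Proof. by rewrite setUS // subD1set. Qed.

Lemma kclique_in_facet u : u \in C -> kclique_in W' (facet u).
Proof.
move=> uC; case/andP: kclique_vC => _ cvC.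
rewrite /kclique_in /kclique (subset_clique (facet_sub u) cvC).
rewrite (subset_trans (facet_sub u)) ?setUS //.
by rewrite cardsU1 in_setD1 (negPf v_notin_C) andbF -card_C (cardsD1 u C) uC eqxx.
Qed.

Lemma kclique_in_ext A : kclique_in W A -> kclique_in W' A.
Proof. by case/andP=> kA sAW; rewrite /kclique_in kA (subset_trans sAW) ?subsetUr. Qed.

Lemma v_notin_kclique_in A : kclique_in W A -> v \notin A.
Proof. by case/andP=> _ /subsetP sAW; apply: contra vNW; apply: sAW. Qed.

Lemma facet_inj : {in C &, injective facet}.
Proof.
move=> u w uC wC fuw; apply/eqP; apply: contraT => uw.
have : u \in facet w by rewrite in_setU1 in_setD1 uw uC orbT.
by rewrite -fuw in_setU1 in_setD1 eqxx /= orbF => /eqP uv; move: v_notin_C; rewrite -uv uC.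
Qed.

Lemma clique_through_v S : clique e S -> S \subset W' -> v \in S -> S :\ v \subset C.
Proof.
move=> cS sSW vS; apply/subsetP => x; rewrite in_setD1 => /andP[xv xS].
have xW : x \in W by move: (subsetP sSW x xS); rewrite in_setU1 (negPf xv).
rewrite -adj_v //.
move/forallP: cS => /(_ v)/implyP/(_ vS)/forallP/(_ x)/implyP/(_ xS)/implyP.
by apply; rewrite eq_sym.
Qed.

Lemma kclique_through_v S : kclique e k.+1 S -> S \subset W' -> v \in S -> S = v |: C.
Proof.
case/andP=> /eqP cardS cS sSW vS; have sSC := clique_through_v cS sSW vS.
suff /eqP <- : S :\ v == C by rewrite setD1K.
by rewrite eqEcard sSC card_C; move: (cardsD1 v S); rewrite vS cardS /=; lia.
Qed.

Lemma kclique_in_extP A : kclique_in W' A ->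
  kclique_in W A \/ exists2 u, u \in C & A = facet u.
Proof.
case/andP=> /andP[/eqP cardA cA] sAW; case vA: (v \in A); last first.
  by left; rewrite /kclique_in /kclique cardA eqxx cA (subsetU1_notin sAW) ?vA.
right; have sAC := clique_through_v cA sAW vA.
have cardAv : #|A :\ v| = k.-1 by move: (cardsD1 v A); rewrite vA cardA => ->.
have /subsetPn[u uC uNA] : ~~ (C \subset A :\ v).
  by apply/negP => /subset_leq_card; rewrite cardAv card_C leqNgt ltn_predL k_gt0.
exists u => //; rewrite -(setD1K vA); congr (_ |: _); apply/eqP.
rewrite eqEcard cardAv -card_C (cardsD1 u C) uC leqnn andbT.
by apply/subsetP => x xA; rewrite in_setD1 (subsetP sAC x xA) andbT; apply: contraNneq uNA => <-.
Qed.

Lemma card_kcliques_in_ext : #|kcliques_in e k W'| = #|kcliques_in e k W| + k.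
Proof.
have -> : kcliques_in e k W' = kcliques_in e k W :|: [set facet u | u in C].
  apply/setP => A; rewrite !inE; apply/idP/orP.
    by case/kclique_in_extP => [-> | [u uC ->]]; [left | right; apply: imset_f].
  by case=> [/kclique_in_ext // | /imsetP[u uC ->]]; apply: kclique_in_facet.
rewrite cardsU card_in_imset ?card_C; last exact: facet_inj.
suff -> : kcliques_in e k W :&: [set facet u | u in C] = set0 by rewrite cards0 subn0.
apply/setP => A; rewrite !inE; apply/negP => /andP[/v_notin_kclique_in vNA /imsetP[u _ Au]].
by rewrite Au v_in_facet in vNA.
Qed.

Lemma kclique_in_retract A : kclique_in W' A -> kclique_in W (retract A).
Proof.
rewrite /retract; case: ifP => [_ _ | vA]; first exact: kclique_in_C.
by case/kclique_in_extP => [// | [u _ Au]]; rewrite Au v_in_facet in vA.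
Qed.

Lemma retract_id A : kclique_in W A -> retract A = A.
Proof. by move/v_notin_kclique_in => vNA; rewrite /retract (negPf vNA). Qed.

Lemma retract_sub_vC A : kclique e k A -> A \subset v |: C -> retract A = C.
Proof.
case/andP=> /eqP cardA _ sAvC; rewrite /retract; case: ifP => // vNA.
by apply/eqP; rewrite eqEcard cardA card_C leqnn (subsetU1_notin sAvC) ?vNA.
Qed.

Lemma kstep_in_retract A B : kclique_in W' A -> kclique_in W' B -> kstep_in W' A B ->
  retract A = retract B \/ kstep_in W (retract A) (retract B).
Proof.
case/andP=> kA _ /andP[kB _] /existsP[S /and4P[kS sSW sAS sBS]].
case vS: (v \in S).
  by rewrite (kclique_through_v kS sSW vS) in sAS sBS; left; rewrite !retract_sub_vC.
have vNA : v \notin A by apply: contraFN vS; apply: (subsetP sAS).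
have vNB : v \notin B by apply: contraFN vS; apply: (subsetP sBS).
right; rewrite /retract (negPf vNA) (negPf vNB); apply/existsP; exists S.
by rewrite kS sAS sBS (subsetU1_notin sSW) ?vS.
Qed.

Lemma kwalk_in_retract m A B : kwalk_in W' m A B ->
  exists2 m', m' <= m & kwalk_in W m' (retract A) (retract B).
Proof.
elim: m A => [|m IHm] A /=.
  by case/andP=> kA /eqP <-; exists 0; rewrite //= kclique_in_retract ?eqxx.
case/andP=> kA /existsP[Y /andP[sAY wYB]]; have /andP[kY _] := kwalk_in_kclique wYB.
have [m' le_m'm wYB'] := IHm Y wYB.
case: (kstep_in_retract kA kY sAY) => [-> | sAY']; first by exists m'; rewrite ?leqW.
exists m'.+1 => //=; rewrite kclique_in_retract //=.
by apply/existsP; exists (retract Y); rewrite sAY'.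
Qed.

Lemma retract_kstep_in_v A B : kstep_in W' A B -> v \in A -> kclique e k B -> retract B = C.
Proof.
case/existsP=> S /and4P[kS sSW sAS sBS] vA kB.
by rewrite (retract_sub_vC kB) // -(kclique_through_v kS sSW (subsetP sAS v vA)).
Qed.

Lemma is_kdist_in_ext A B d : kclique_in W A -> kclique_in W B ->
  is_kdist_in W A B d -> is_kdist_in W' A B d.
Proof.
move=> kA kB [wAB min_d]; split; first by apply: kwalk_in_subset wAB; rewrite subsetUr.
by move=> m /kwalk_in_retract[m' le_m'm]; rewrite !retract_id // => /min_d /leq_trans; apply.
Qed.

Lemma kstep_in_vC A B : A \subset v |: C -> B \subset v |: C -> kstep_in W' A B.
Proof.
move=> sAvC sBvC; apply/existsP; exists (v |: C).
by rewrite kclique_vC sAvC sBvC setUS.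
Qed.

Lemma is_kdist_in_facet u B d : u \in C -> kclique_in W B ->
  is_kdist_in W C B d -> is_kdist_in W' (facet u) B d.+1.
Proof.
move=> uC kB [wCB min_d]; split.
  rewrite /= kclique_in_facet //=; apply/existsP; exists C.
  by rewrite kstep_in_vC ?facet_sub ?subsetUr //; apply: kwalk_in_subset wCB; rewrite subsetUr.
case=> [/= /andP[_ /eqP fB] | m /= /andP[_ /existsP[Y /andP[sY wYB]]]].
  by move: (v_notin_kclique_in kB); rewrite -fB v_in_facet.
have /andP[/andP[kY _] _] := kwalk_in_kclique wYB.
have [m' le_m'm] := kwalk_in_retract wYB.
by rewrite (retract_kstep_in_v sY (v_in_facet u) kY) retract_id // => /min_d /leq_trans; apply.
Qed.

Lemma is_kdist_in_facets u w : u \in C -> w \in C -> u != w ->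
  is_kdist_in W' (facet u) (facet w) 1.
Proof.
move=> uC wC uw; split.
  by rewrite kwalk_in1 !kclique_in_facet // kstep_in_vC ?facet_sub.
by case=> // /= /andP[_ /eqP /facet_inj fuw]; rewrite fuw ?eqxx in uw.
Qed.

Section ExtensionDistances.
Variable t : nat.
Hypotheses (cardW : #|W| = t + k) (diamW : forall A B, kclique_in W A -> kclique_in W B ->
  exists2 d, is_kdist_in W A B d & d <= t).

Lemma kdist_inE A B d : is_kdist_in W A B d -> d <= t -> kdist_in e k W A B = d.
Proof.
move=> dAB le_dt; apply: kdist_in_eq dAB _.
by apply: leq_trans (max_card (mem W)); rewrite cardW (leq_trans le_dt) ?leq_addr.
Qed.

Lemma kdist_in_extE A B d : is_kdist_in W' A B d -> d <= t.+1 -> kdist_in e k W' A B = d.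
Proof.
move=> dAB le_dt; apply: kdist_in_eq dAB _.
apply: leq_trans (max_card (mem W')).
by rewrite cardsU1 vNW cardW (leq_trans le_dt) // addSn ltnS leq_addr.
Qed.

Lemma diam_ext A B : kclique_in W' A -> kclique_in W' B ->
  exists2 d, is_kdist_in W' A B d & d <= t.+1.
Proof.
case/kclique_in_extP => [kA | [u uC ->]] /kclique_in_extP[kB | [w wC ->]].
- by have [d dAB le_dt] := diamW kA kB; exists d; [apply: is_kdist_in_ext | apply: leqW].
- have [d dCA le_dt] := diamW kclique_in_C kA; exists d.+1 => //.
  exact/is_kdist_in_sym/is_kdist_in_facet.
- by have [d dCB le_dt] := diamW kclique_in_C kB; exists d.+1; first exact: is_kdist_in_facet.
have [<- | uw] := eqVneq u w; last by exists 1; first exact: is_kdist_in_facets.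
by exists 0; first by apply/is_kdist_in0/kclique_in_facet.
Qed.

Lemma kdist_in_ext_old A B : kclique_in W A -> kclique_in W B ->
  kdist_in e k W' A B = kdist_in e k W A B.
Proof.
move=> kA kB; have [d dAB le_dt] := diamW kA kB.
by rewrite (kdist_inE dAB) // (kdist_in_extE (is_kdist_in_ext kA kB dAB)) ?leqW.
Qed.

Lemma kdist_in_ext_facet u B : u \in C -> kclique_in W B ->
  kdist_in e k W' (facet u) B = (kdist_in e k W C B).+1.
Proof.
move=> uC kB; have [d dCB le_dt] := diamW kclique_in_C kB.
by rewrite (kdist_inE dCB) // (kdist_in_extE (is_kdist_in_facet uC kB dCB)).
Qed.

Lemma kdist_in_ext_facets u w : u \in C -> w \in C ->
  kdist_in e k W' (facet u) (facet w) = (u != w).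
Proof.
move=> uC wC; have [<- | uw] := eqVneq u w.
  by apply: kdist_in_extE => //; apply/is_kdist_in0/kclique_in_facet.
by apply: kdist_in_extE => //; apply: is_kdist_in_facets.
Qed.

Definition ext_enum c0 (tau0 : 'I_c0 -> {set T}) (x : 'I_k -> T) (i : 'I_(c0 + k)) :=
  match split i with inl a => tau0 a | inr b => facet (x b) end.

Section ExtEnum.
Variables (c0 : nat) (tau0 : 'I_c0 -> {set T}) (x : 'I_k -> T).
Hypotheses (tau0P : kclique_enum_in e k W tau0) (x_inj : injective x) (xC : forall i, x i \in C).

Lemma kclique_in_ext_enum i : kclique_in W' (ext_enum tau0 x i).
Proof.
rewrite /ext_enum; case: (split i) => a; last exact: kclique_in_facet.
by apply: kclique_in_ext; rewrite (proj2 tau0P) codom_f.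
Qed.

Lemma ext_enum_inj : injective (ext_enum tau0 x).
Proof.
have vNtau0 a : v \notin tau0 a by apply: v_notin_kclique_in; rewrite (proj2 tau0P) codom_f.
move=> i j; rewrite /ext_enum -{2}(splitK i) -{2}(splitK j).
case: (split i) => a; case: (split j) => b.
- by move/(proj1 tau0P) => ->.
- by move=> tfb; have := vNtau0 a; rewrite tfb v_in_facet.
- by move=> ftb; have := vNtau0 b; rewrite -ftb v_in_facet.
by move/(facet_inj (xC a) (xC b))/x_inj => ->.
Qed.

Lemma kdistmx_in_ext iC : tau0 iC = C ->
  kdistmx_in e k W' (ext_enum tau0 x) = kdist_border k (kdistmx_in e k W tau0) iC.
Proof.
have ktau0 a : kclique_in W (tau0 a) by rewrite (proj2 tau0P) codom_f.
move=> tau0C; apply/matrixP => i j; rewrite -(splitK i) -(splitK j).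
case: (split i) => a; case: (split j) => b;
  rewrite ?block_mxEul ?block_mxEur ?block_mxEdl ?block_mxEdr !mxE /ext_enum !unsplitK.
- by rewrite kdist_in_ext_old.
- by rewrite kdist_in_sym kdist_in_ext_facet // tau0C kdist_in_sym -addn1 PoszD.
- by rewrite kdist_in_ext_facet // tau0C -addn1 PoszD.
by rewrite kdist_in_ext_facets // (inj_eq x_inj); case: (a != b).
Qed.

End ExtEnum.

Lemma reduces_to_canon_ext :
  #|kcliques_in e k W| = (1 + t * k)%N ->
  (forall c (tau : 'I_c -> {set T}), kclique_enum_in e k W tau ->
     reduces_to_canon k (kdistmx_in e k W tau) t) ->
  forall c (tau : 'I_c -> {set T}), kclique_enum_in e k W' tau ->
    reduces_to_canon k (kdistmx_in e k W' tau) t.+1.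
Proof.
move=> countW reduceW c tau tauP.
have c_eq : c = #|kcliques_in e k W| + k.
  by rewrite (card_kclique_enum_in tauP) card_kcliques_in_ext.
subst c; have tau0P := enum_val_kclique_enum_in e k W.
set tau0 := fun i => _ in tau0P.
have [iC tau0C] : exists iC, tau0 iC = C.
  have /codomP[iC ->] : C \in codom tau0 by rewrite -(proj2 tau0P) kclique_in_C.
  by exists iC.
have [x [x_inj xC]] := enum_set_ord card_C.
have tau_ext i : ext_enum tau0 x i \in codom tau.
  by rewrite -(proj2 tauP) kclique_in_ext_enum.
have [s tau_s] := exists_perm_reindex (ext_enum_inj tau0P x_inj xC) tau_ext.
apply: (reduces_to_canon_perm (s := s)).
have -> : (\matrix_(i, j) kdistmx_in e k W' tau (s i) (s j))%R =
           kdistmx_in e k W' (ext_enum tau0 x).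
  by apply/matrixP => i j; rewrite !mxE !tau_s.
rewrite (kdistmx_in_ext tau0P x_inj xC tau0C).
apply: reduces_to_canon_border => //; last exact: reduceW.
by rewrite mxE tau0C (kdist_inE (is_kdist_in0 kclique_in_C)).
Qed.

End ExtensionDistances.

Lemma ktree_inv_ext t : ktree_inv e k W t -> ktree_inv e k W' t.+1.
Proof.
case=> cardW countW diamW reduceW; split.
- by rewrite cardsU1 vNW cardW.
- by rewrite card_kcliques_in_ext countW mulSn; lia.
- exact: diam_ext.
exact: reduces_to_canon_ext.
Qed.

End KTreeExtension.

Lemma ktree_on_inv (T : finType) (e : rel T) k W : symmetric e -> 0 < k ->
  ktree_on e k W -> exists t, ktree_inv e k W t.
Proof.
move=> esym k_gt0; elim=> [V kV | {}W v _ [t invW] vNW [C /andP[kC sCW] adj_v]].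
  by exists 0; apply: ktree_inv_kclique.
by exists t.+1; apply: (ktree_inv_ext esym k_gt0 vNW kC sCW adj_v invW).
Qed.

Lemma kdistmx_reduces_to_canon (T : finType) (e : rel T) k c (tau : 'I_c -> {set T}) :
  symmetric e -> 0 < k -> is_ktree e k -> kclique_enum e k tau ->
  reduces_to_canon k (kdistmx e k tau) (#|T| - k).
Proof.
move=> esym k_gt0 /(ktree_on_inv esym k_gt0)[t [cardT _ _ reduceT]] /kclique_enum_inT tauP.
by rewrite kdistmx_kdistmx_in // -cardsT cardT addnK; apply: reduceT.
Qed.

Local Open Scope ring_scope.

Lemma unitmx_det_int c (M : 'M[int]_c) : M \in unitmx -> \det M = 1 \/ \det M = -1.
Proof. by rewrite unitmxE => /orP[] /eqP; [left | right]. Qed.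

Theorem mainTheorem2 (k n : nat) (hk : (1 <= k)%N) (hn : (k + 2 <= n)%N)
  (e e' : rel 'I_n)
  (esym : symmetric e) (eirr : irreflexive e)
  (esym' : symmetric e') (eirr' : irreflexive e')
  (hT : is_ktree e k) (hT' : is_ktree e' k)
  (c : nat) (tau tau' : 'I_c -> {set 'I_n})
  (htau : kclique_enum e k tau) (htau' : kclique_enum e' k tau') :
  exists P Q : 'M[int]_c,
    (\det P = 1 \/ \det P = -1) /\ (\det Q = 1 \/ \det Q = -1) /\
    kdistmx e k tau = P *m kdistmx e' k tau' *m Q.
Proof.
have D := kdistmx_reduces_to_canon esym hk hT htau.
have D' := kdistmx_reduces_to_canon esym' hk hT' htau'.
have [P [Q [uP uQ DPD'Q]]] := reduces_to_canon_equiv D D'.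
by exists P, Q; split; [|split] => //; apply: unitmx_det_int.
Qed.
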